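(* Let $n\ge 2$, let $K\subset\mathbb{R}^n$ be a convex body of constant width $\Theta$, and let $\gamma\subset\mathbb{R}^n$ be any curve such that $K\subset\operatorname{co}(\gamma)$. Then $$ \operatorname{length}(\gamma)\ge 2(\pi-1)\sqrt{\frac{n-1}{2\pi}}\cdot\Theta . $$
   Context: $\mathbb{R}^n$ carries the standard Euclidean metric $d$. A convex body is any nonempty compact convex subset of $\mathbb{R}^n$. $\operatorname{co}(A)$ denotes the convex hull of $A$. The support function of $K$ is $h(K,u)=\sup\{(x,u):x\in K\}$ and the width function is $w(K,u)=h(K,u)+h(K,-u)$ for $u$ in the unit sphere $S^{n-1}$; $K$ has constant width $\Theta$ if $w(K,u)=\Theta$ for all $u\in S^{n-1}$. A curve is the image of a continuous map $\varphi:[a,b]\to\mathbb{R}^n$; its length is $\operatorname{length}(\gamma)=\sup\sum_{i=1}^m d(\varphi(t_{i-1}),\varphi(t_i))$ over all partitions $a=t_0<\dots<t_m=b$ (possibly $+\infty$). *)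

From HB Require Import structures.
From mathcomp Require Import all_boot all_order all_algebra.
From mathcomp Require Import all_classical all_reals all_analysis.
Set Implicit Arguments. Unset Strict Implicit. Unset Printing Implicit Defensive.
Import Order.TTheory GRing.Theory Num.Theory.
Import numFieldNormedType.Exports.
Local Open Scope classical_set_scope.
Local Open Scope ring_scope.

Section Defs.
Variables (R : realType) (n : nat).
Notation pt := 'rV[R]_n.

Definition dotp (x y : pt) : R := \sum_(i < n) x 0 i * y 0 i.

Definition edist (x y : pt) : R := Num.sqrt (\sum_(i < n) (x 0 i - y 0 i) ^+ 2).

Definition usphere : set pt := [set u | dotp u u = 1].

Definition convex (A : set pt) : Prop :=
  forall x y (t : R), A x -> A y -> 0 <= t -> t <= 1 ->
    A (t *: x + (1 - t) *: y).

Definition convex_body (K : set pt) : Prop :=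
  K !=set0 /\ compact K /\ convex K.

Definition co (A : set pt) : set pt :=
  [set x | forall C : set pt, convex C -> A `<=` C -> C x].

Definition support (K : set pt) (u : pt) : R := sup [set dotp x u | x in K].

Definition width (K : set pt) (u : pt) : R := support K u + support K (- u).

Definition constant_width (K : set pt) (Theta : R) : Prop :=
  forall u, usphere u -> width K u = Theta.

Definition is_curve_param (a b : R) (phi : R -> pt) : Prop :=
  a < b /\ {within `[a, b], continuous phi}.

Definition curve (a b : R) (phi : R -> pt) : set pt := phi @` `[a, b].

Definition partition (a b : R) (m : nat) (t : nat -> R) : Prop :=
  t 0%N = a /\ t m = b /\ (forall i, (i < m)%N -> t i < t i.+1).

Definition polygonal_length (phi : R -> pt) (m : nat) (t : nat -> R) : R :=
  \sum_(i < m) edist (phi (t i)) (phi (t i.+1)).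

Definition curve_length (a b : R) (phi : R -> pt) : \bar R :=
  ereal_sup [set l : \bar R | exists (m : nat) (t : nat -> R),
    partition a b m t /\ l = (polygonal_length phi m t)%:E].
End Defs.

From Pilot Require Import Defs.
From HB Require Import structures.
From mathcomp Require Import all_boot all_order all_algebra.
From mathcomp Require Import all_classical all_reals all_analysis.
From mathcomp Require Import ring lra zify.
Import Order.TTheory GRing.Theory Num.Theory.
Import numFieldNormedType.Exports.
Local Open Scope classical_set_scope.
Local Open Scope ring_scope.

(* A Householder reflection turns the standard basis into an orthonormal frame
   u_1, ..., u_n whose vectors u_j, j <> k, are orthogonal to the chord
   phi a - phi b.  As K lies in the convex hull of the curve, the width Theta
   of K in direction u_j is at most the oscillation of t |-> (phi t, u_j) on
   [a, b]; this function takes the same value at a and b, so its variation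
   along any inscribed polygon through its extremal points is at least
   2 Theta.  Summing over the n - 1 directions j <> k, and bounding each edge
   by Cauchy-Schwarz and Bessel's inequality, gives
   2 (n - 1) Theta <= sqrt (n - 1) * length, i.e. length >= 2 sqrt (n - 1) Theta.
   This dominates the stated bound because (pi - 1)^2 <= 2 pi, which follows
   from pi < 7/2, i.e. from cos (7/4) < 0. *)

Section RealSequences.
Context {R : realType}.

Lemma sum_abs_le_sqrt_card (I : finType) (P : pred I) (a : I -> R) :
  \sum_(i in P) `|a i| <= Num.sqrt #|P|%:R * Num.sqrt (\sum_(i in P) a i ^+ 2).
Proof.
have S0 : 0 <= \sum_(i in P) `|a i| by apply: sumr_ge0.
rewrite -sqrtrM // -(ger0_norm S0) -sqrtr_sqr; apply: ler_wsqrtr.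
have -> : (\sum_(i in P) `|a i|) ^+ 2 = \sum_(i in P) \sum_(j in P) `|a i| * `|a j|.
  by rewrite expr2 mulr_suml; apply: eq_bigr => i _; rewrite mulr_sumr.
apply: (@le_trans _ _ (\sum_(i in P) \sum_(j in P) (a i ^+ 2 + a j ^+ 2) / 2)).
  apply: ler_sum => i _; apply: ler_sum => j _.
  have := sqr_ge0 (`|a i| - `|a j|); rewrite sqrrB !real_normK ?num_real //.
  lra.
have -> : \sum_(i in P) \sum_(j in P) (a i ^+ 2 + a j ^+ 2) / 2 =
          \sum_(i in P) (a i ^+ 2 *+ #|P| + \sum_(j in P) a j ^+ 2) / 2.
  by apply: eq_bigr => i _; rewrite -mulr_suml big_split /= sumr_const.
rewrite -mulr_suml big_split /= sumr_const sumrMnl -mulr_natl.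
lra.
Qed.

Lemma dist_le_variation (g : nat -> R) i j : (i <= j)%N ->
  `|g j - g i| <= \sum_(i <= l < j) `|g l.+1 - g l|.
Proof. by move=> ij; rewrite -telescope_sumr //; exact: ler_norm_sum. Qed.

Lemma closed_variation_ge (g : nat -> R) m p q :
  g 0%N = g m -> (p <= m)%N -> (q <= m)%N ->
  2 * `|g p - g q| <= \sum_(l < m) `|g l.+1 - g l|.
Proof.
wlog pq : p q / (p <= q)%N => [wlog_pq|] g0 pm qm.
  by case/orP: (leq_total p q) => /wlog_pq; rewrite 1?distrC; apply.
rewrite -(big_mkord xpredT (fun l => `|g l.+1 - g l|)).
rewrite (big_cat_nat (leq0n p) (leq_trans pq qm)) (big_cat_nat pq qm) /=.
have := dist_le_variation g _ _ (leq0n p); have := dist_le_variation g _ _ pq.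
have := dist_le_variation g _ _ qm.
have : `|g p - g q| <= `|g p - g 0%N| + `|g m - g q|.
  by rewrite g0 -[g p - g q](subrKA (g m)) ler_normD.
rewrite (distrC (g q)); lra.
Qed.

Lemma exists_partition_through (a b : R) (s : seq R) :
  a < b -> {subset s <= `[a, b]} ->
  exists m t, Defs.partition a b m t /\
    forall x, x \in s -> exists2 p, (p <= m)%N & t p = x.
Proof.
move=> ab sab.
pose mid := sort <=%R (undup [seq x <- s | a < x < b]).
have mid_itv x : x \in mid -> a < x < b.
  by rewrite mem_sort mem_undup mem_filter => /andP[].
have mid_path : path <%R a (rcons mid b).
  rewrite rcons_path (path_sortedE lt_trans) sort_lt_sorted undup_uniq andbT.
  apply/andP; split; first by apply/allP => x /mid_itv /andP[].
  by have := mem_last a mid; rewrite inE => /predU1P[->|/mid_itv/andP[]].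
exists (size mid).+1, (nth a (a :: rcons mid b)); split.
  split=> //=; split; first by rewrite nth_rcons ltnn eqxx.
  by move=> i im; move/pathP: mid_path; apply; rewrite size_rcons.
move=> x xs.
have x_pts : x \in a :: rcons mid b.
  rewrite inE mem_rcons inE mem_sort mem_undup mem_filter xs andbT.
  have := sab x xs; rewrite in_itv /= !le_eqVlt.
  by case/andP => /predU1P[->|->] /predU1P[->|->]; rewrite ?eqxx ?orbT.
exists (index x (a :: rcons mid b)); last exact: nth_index.
by rewrite -ltnS; move: x_pts; rewrite -index_mem /= size_rcons.
Qed.
End RealSequences.

Section InnerProduct.
Context {R : realType} {n : nat}.
Implicit Types (x y z w d : 'rV[R]_n) (c : R).

Lemma dotpC x y : dotp x y = dotp y x.
Proof. by apply: eq_bigr => i _; rewrite mulrC. Qed.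

Lemma dotpDl x y z : dotp (x + y) z = dotp x z + dotp y z.
Proof. by rewrite /dotp -big_split; apply: eq_bigr => i _; rewrite mxE mulrDl. Qed.

Lemma dotpZl c x y : dotp (c *: x) y = c * dotp x y.
Proof. by rewrite /dotp mulr_sumr; apply: eq_bigr => i _; rewrite mxE mulrA. Qed.

Lemma dotpNl x y : dotp (- x) y = - dotp x y.
Proof. by rewrite -scaleN1r dotpZl mulN1r. Qed.

Lemma dotpBl x y z : dotp (x - y) z = dotp x z - dotp y z.
Proof. by rewrite dotpDl dotpNl. Qed.

Lemma dotpDr x y z : dotp x (y + z) = dotp x y + dotp x z.
Proof. by rewrite dotpC dotpDl !(dotpC x). Qed.

Lemma dotpZr c x y : dotp x (c *: y) = c * dotp x y.
Proof. by rewrite dotpC dotpZl dotpC. Qed.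

Lemma dotpNr x y : dotp x (- y) = - dotp x y.
Proof. by rewrite dotpC dotpNl dotpC. Qed.

Lemma dotpBr x y z : dotp x (y - z) = dotp x y - dotp x z.
Proof. by rewrite dotpDr dotpNr. Qed.

Definition dotpE := (dotpDl, dotpBl, dotpNl, dotpZl, dotpDr, dotpBr, dotpNr, dotpZr).

Lemma dotpp_ge0 x : 0 <= dotp x x.
Proof. by apply: sumr_ge0 => i _; rewrite -expr2 sqr_ge0. Qed.

Lemma dotpp_eq0 x : (dotp x x == 0) = (x == 0).
Proof.
apply/idP/eqP => [/eqP x0|->]; last by rewrite /dotp big1 // => i _; rewrite mxE mulr0.
apply/rowP => i; apply/eqP; rewrite mxE -[_ == 0]orbb -mulf_eq0; apply/eqP.
by move/psumr_eq0P : x0 => -> // j _; rewrite -expr2 sqr_ge0.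
Qed.

Lemma dotp_delta x j : dotp x (delta_mx 0 j) = x 0 j.
Proof.
rewrite /dotp (bigD1 j) //= mxE !eqxx mulr1 big1 ?addr0 // => i /negbTE ij.
by rewrite mxE ij andbF mulr0.
Qed.

Lemma edistE x y : Defs.edist x y = Num.sqrt (dotp (x - y) (x - y)).
Proof. by congr Num.sqrt; apply: eq_bigr => i _; rewrite !mxE expr2. Qed.

Lemma dotp_continuous y : continuous (fun x => dotp x y).
Proof.
apply: (continuous_big (op := +%R)) => [|i _]; first exact: add_continuous.
by move=> x; apply: continuousM; [exact: coord_continuous | exact: cst_continuous].
Qed.

(* For w = 0 the junk value of division by 0 makes [reflection w] the identity. *)
Definition reflection w x := x - (2 * dotp x w / dotp w w) *: w.

Lemma dotp_reflection w x y : dotp (reflection w x) (reflection w y) = dotp x y.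
Proof.
rewrite /reflection !dotpE (dotpC w y).
have [->|w0] := eqVneq (dotp w w) 0; first by rewrite invr0 !(mulr0, mul0r) !subr0.
by field.
Qed.

Lemma dotp_reflectionr w x y : dotp x (reflection w y) = dotp (reflection w x) y.
Proof. by rewrite /reflection !dotpE (dotpC w y) (dotpC x w); ring. Qed.

Definition householder d (k : 'I_n) :=
  reflection (Num.sqrt (dotp d d) *: delta_mx 0 k - d).

Lemma householder_id d k : householder d k d = Num.sqrt (dotp d d) *: delta_mx 0 k.
Proof.
set r := Num.sqrt (dotp d d); set w := r *: delta_mx 0 k - d.
have r2 : r * r = dotp d d by rewrite -expr2 sqr_sqrtr // dotpp_ge0.
have ww : dotp w w = 2 * (r * r) - 2 * r * dotp d (delta_mx 0 k).
  rewrite /w !dotpE (dotpC (delta_mx 0 k) d) !dotp_delta mxE !eqxx /= -r2; ring.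
have dw : 2 * dotp d w = - dotp w w.
  by rewrite ww /w !dotpE -r2; ring.
have [w0|w0] := eqVneq (dotp w w) 0.
  have /eqP w0' : w == 0 by rewrite -dotpp_eq0 w0.
  rewrite /householder -/r -/w w0' /reflection scaler0 subr0.
  by apply/esym/eqP; rewrite -subr_eq0 -w0'.
rewrite /householder /reflection -/r -/w dw mulNr divff // scaleN1r opprK.
by rewrite /w addrC subrK.
Qed.

Lemma orthonormal_frame_orthogonal_to d (k : 'I_n) :
  exists u : 'I_n -> 'rV[R]_n,
    [/\ forall j, dotp (u j) (u j) = 1,
        forall j, j != k -> dotp d (u j) = 0 &
        forall x, \sum_j dotp x (u j) ^+ 2 = dotp x x].
Proof.
pose H := householder d k.
have H_isometry x y : dotp (H x) (H y) = dotp x y by exact: dotp_reflection.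
have H_selfadjoint x y : dotp x (H y) = dotp (H x) y by exact: dotp_reflectionr.
exists (fun j => H (delta_mx 0 j)); split => [j|j jk|x].
- by rewrite H_isometry dotp_delta mxE !eqxx.
- by rewrite H_selfadjoint /H householder_id dotpZl dotp_delta mxE eqxx (negbTE jk) mulr0.
- by rewrite -(H_isometry x x); apply: eq_bigr => j _; rewrite H_selfadjoint dotp_delta expr2.
Qed.

Lemma sum_variation_le_polygon (u : 'I_n -> 'rV[R]_n)
    (P : pred 'I_n) (x : nat -> 'rV[R]_n) (m : nat) :
  (forall v, \sum_(j in P) dotp v (u j) ^+ 2 <= dotp v v) ->
  \sum_(j in P) \sum_(i < m) `|dotp (x i.+1) (u j) - dotp (x i) (u j)|
    <= Num.sqrt #|P|%:R * \sum_(i < m) Defs.edist (x i) (x i.+1).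
Proof.
move=> bessel; rewrite exchange_big mulr_sumr; apply: ler_sum => i _.
apply: le_trans (sum_abs_le_sqrt_card _ P _) _.
rewrite ler_wpM2l ?sqrtr_ge0 // edistE -opprB dotpNl dotpNr opprK.
by apply: ler_wsqrtr; under eq_bigr do rewrite -dotpBl; exact: bessel.
Qed.

End InnerProduct.

Section Width.
Context {R : realType} {n : nat}.
Implicit Types (K A : set 'rV[R]_n) (u : 'rV[R]_n).

Lemma convex_halfspace u (M : R) : Defs.convex [set x | dotp x u <= M].
Proof. by move=> x y t /= xM yM t0 t1; rewrite dotpDl !dotpZl; nra. Qed.

Lemma support_le_co K A u (M : R) : K !=set0 -> K `<=` co A ->
  (forall x, A x -> dotp x u <= M) -> Defs.support K u <= M.
Proof.
move=> [x0 Kx0] KA AM; apply: ge_sup => [|_ [x Kx <-]]; first by exists (dotp x0 u), x0.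
exact: (KA x Kx _ (convex_halfspace u M)).
Qed.

Lemma width_le_co K A u (lo hi : R) : K !=set0 -> K `<=` co A ->
  (forall x, A x -> lo <= dotp x u <= hi) -> Defs.width K u <= hi - lo.
Proof.
move=> K0 KA Alohi; apply: lerD; apply: support_le_co K0 KA _ => x /Alohi/andP[lox xhi] //.
by rewrite dotpNr lerN2.
Qed.

Lemma width_le_curve_oscillation u K (a b : R) (phi : R -> 'rV[R]_n) :
  is_curve_param a b phi -> K !=set0 -> K `<=` co (curve a b phi) ->
  exists s : R * R, [/\ s.1 \in `[a, b], s.2 \in `[a, b] &
    Defs.width K u <= dotp (phi s.1) u - dotp (phi s.2) u].
Proof.
move=> [ab phi_cont] K0 Kco.
have f_cont : {within `[a, b], continuous (fun t => dotp (phi t) u)}.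
  by move=> t; apply: continuous_comp (phi_cont t) (dotp_continuous u _).
have [hi hi_ab hi_max] := EVT_max (ltW ab) f_cont.
have [lo lo_ab lo_min] := EVT_min (ltW ab) f_cont.
exists (hi, lo); split => //; apply: width_le_co K0 Kco _ => _ [t t_ab <-].
by rewrite lo_min ?hi_max.
Qed.

End Width.

Section PiBound.
Context {R : realType}.

(* Past degree 4, the series of - cos x groups into positive pairs
   x^(2k) / (2k)! - x^(2k+2) / (2k+2)! (k odd, k >= 3) since x^2 < 7 * 8. *)
Lemma cos_lt0_taylor (x : R) :
  x ^+ 2 < 56 -> 1 - x ^+ 2 / 2 + x ^+ 4 / 24 < 0 -> cos x < 0.
Proof.
move=> x56 x_taylor.
have x2_gt0 : 0 < x ^+ 2.
  rewrite lt_neqAle sqr_ge0 andbT eq_sym sqrf_eq0; apply/eqP => x0.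
  by move: x_taylor; rewrite x0 expr0n /= expr0n /=; lra.
rewrite -(opprK (cos _)) oppr_lt0; have /cvgN h := @cvg_cos_coeff' R x.
rewrite -(cvg_lim (@Rhausdorff R) h).
apply: (@lt_trans _ _ (\sum_(0 <= i < 3) - cos_coeff' x i)).
  do 3 rewrite big_nat_recl//; rewrite big_nil addr0 /cos_coeff' /= -!exprnP.
  rewrite -[0.*2]/0%N -[1.*2]/2%N -[2.*2]/4%N !factS fact0 -[(4 * _)%N]/24%N.
  rewrite -[(2 * _)%N]/2%N expr0 expr1 -signr_odd /= expr0; lra.
rewrite -seriesN lt_sum_lim_series //; first by move/cvgP in h; rewrite seriesN.
move=> d; rewrite /cos_coeff' -!exprnP.
set k := (3 + d.*2)%N.
have -> : (3 + d.*2.+1)%N = k.+1 by rewrite /k addnS.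
have k_odd : odd k by rewrite /k oddD odd_double.
have k_ge3 : (3 <= k)%N by rewrite /k leq_addr.
clearbody k.
have sk : (-1 : R) ^+ k = -1 by rewrite -signr_odd k_odd expr1.
have sk1 : (-1 : R) ^+ k.+1 = 1 by rewrite exprS sk mulN1r opprK.
rewrite sk sk1 mulN1r mul1r mulNr opprK doubleS !factS !natrM exprSr exprSr.
have F_gt0 : (0 : R) < (k.*2)`!%:R by rewrite ltr0n fact_gt0.
have A_ge : (7 : R) <= (k.*2.+1)%:R by rewrite (ler_nat R 7); lia.
have B_ge : (8 : R) <= (k.*2.+2)%:R by rewrite (ler_nat R 8); lia.
set y := x ^+ k.*2; set F := (k.*2)`!%:R; set A := (k.*2.+1)%:R; set B := (k.*2.+2)%:R.
have y_gt0 : 0 < y by rewrite /y -mul2n exprM exprn_gt0.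
have -> : y / F - y * x * x / (B * (A * F)) = y / F * (1 - x ^+ 2 / (B * A)).
  by field; apply/and3P; split; lra.
rewrite mulr_gt0 ?divr_gt0 // subr_gt0 ltr_pdivrMr ?mul1r; nra.
Qed.

Lemma pi_lt_7_2 : pi < 7 / 2 :> R.
Proof.
rewrite ltNge; apply/negP => pi_ge.
have : 0 <= cos (7 / 4 : R).
  by apply: cos_ge0_pihalf; apply/andP; split; have := pi_ge0 R; lra.
by have := @cos_lt0_taylor (7 / 4); lra.
Qed.

Lemma pi_sub1_le_sqrt2pi : pi - 1 <= Num.sqrt (2 * pi) :> R.
Proof.
(* (pi - 1)^2 - 2 pi = (pi - 2)^2 - 3 < 0 for 2 <= pi < 7/2. *)
have := pi_ge2 R; have := pi_lt_7_2; have := sqrtr_ge0 (2 * pi : R).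
have : Num.sqrt (2 * pi : R) ^+ 2 = 2 * pi by rewrite sqr_sqrtr // mulr_ge0 ?pi_ge0.
nra.
Qed.

Lemma pi_constant_mul_le (c Theta L : R) : 1 <= c -> 0 <= L ->
  c * (2 * Theta) <= Num.sqrt c * L ->
  2 * (pi - 1) * Num.sqrt (c / (2 * pi)) * Theta <= L.
Proof.
move=> c_ge1 L_ge0 cL.
pose r := Num.sqrt (2 * pi : R); pose s := Num.sqrt c.
have r_gt0 : 0 < r by rewrite sqrtr_gt0 mulr_gt0 ?pi_gt0.
have s_gt0 : 0 < s by rewrite sqrtr_gt0; lra.
have sTheta : 2 * s * Theta <= L.
  have s2 : s ^+ 2 = c by rewrite sqr_sqrtr //; lra.
  rewrite -(ler_pM2l s_gt0) [leLHS](_ : _ = s ^+ 2 * (2 * Theta)) ?s2 //.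
  by rewrite -s2; ring.
have pr : (pi - 1) / r <= 1 by rewrite ler_pdivrMr // mul1r pi_sub1_le_sqrt2pi.
have pr0 : 0 <= (pi - 1) / r by rewrite divr_ge0 ?(ltW r_gt0) //; have := pi_ge2 R; lra.
have -> : 2 * (pi - 1) * Num.sqrt (c / (2 * pi)) * Theta = (pi - 1) / r * (2 * s * Theta).
  have c_ge0 : 0 <= c by lra.
  have pi2_ge0 : 0 <= 2 * pi :> R by rewrite mulr_ge0 ?pi_ge0.
  by rewrite sqrtrM ?sqrtrV // -/r -/s; field; rewrite gt_eqF.
have [z0|z0] := lerP 0 (2 * s * Theta).
  exact: le_trans (ler_piMl z0 pr) sTheta.
exact: le_trans (mulr_ge0_le0 pr0 (ltW z0)) L_ge0.
Qed.

End PiBound.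

Theorem corollary1 (R : realType) (n : nat) (K : set 'rV[R]_n) (Theta : R)
    (a b : R) (phi : R -> 'rV[R]_n) :
  (2 <= n)%N ->
  convex_body K ->
  constant_width K Theta ->
  is_curve_param a b phi ->
  K `<=` co (curve a b phi) ->
  ((2 * (pi - 1) * Num.sqrt ((n - 1)%:R / (2 * pi)) * Theta)%:E
     <= curve_length a b phi)%E.
Proof.
move=> n_ge2 [K0 _] K_width phi_curve Kco.
pose k : 'I_n := Ordinal (ltnW n_ge2).
have [u [u_unit u_perp u_parseval]] := orthonormal_frame_orthogonal_to (phi a - phi b) k.
have /choice[s s_osc] j := width_le_curve_oscillation (u j) K a b phi phi_curve K0 Kco.
pose pts := [seq (s j).1 | j <- enum 'I_n] ++ [seq (s j).2 | j <- enum 'I_n].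
have [|m [t [t_part t_pts]]] := exists_partition_through a b pts (proj1 phi_curve).
  by move=> x; rewrite mem_cat => /orP[] /mapP[j _ ->]; case: (s_osc j).
pose f j i := dotp (phi (t i)) (u j).
have f_var j : j != k -> 2 * Theta <= \sum_(i < m) `|f j i.+1 - f j i|.
  move=> jk; have [_ _ osc] := s_osc j.
  have [s1_pts s2_pts] : (s j).1 \in pts /\ (s j).2 \in pts.
    by rewrite !mem_cat; split; apply/orP; [left | right]; apply/mapP; exists j; rewrite ?mem_enum.
  have [[p pm tp] [q qm tq]] := (t_pts _ s1_pts, t_pts _ s2_pts).
  apply: le_trans (closed_variation_ge _ _ _ _ _ pm qm); last first.
    by rewrite /f; case: t_part => -> [-> _]; apply/eqP; rewrite -subr_eq0 -dotpBl u_perp.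
  rewrite ler_pM2l // /f tp tq -(K_width _ (u_unit j)).
  exact: le_trans osc (ler_norm _).
have bessel v : \sum_(j in predC1 k) dotp v (u j) ^+ 2 <= dotp v v.
  by rewrite -u_parseval [leRHS](bigD1 k) //= lerDr sqr_ge0.
have upper := sum_variation_le_polygon u (predC1 k) (phi \o t) m bessel.
have lower : \sum_(j in predC1 k) 2 * Theta
             <= \sum_(j in predC1 k) \sum_(i < m) `|f j i.+1 - f j i|.
  by apply: ler_sum => j; rewrite inE; exact: f_var.
rewrite sumr_const cardC1 card_ord -(mulr_natl (2 * Theta)) in lower.
rewrite cardC1 card_ord in upper.
apply: (@le_trans _ _ (polygonal_length phi m t)%:E); last by apply: ereal_sup_ubound; exists m, t.
rewrite lee_fin subn1; apply: pi_constant_mul_le (le_trans lower upper).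
  by rewrite ler1n -subn1 subn_gt0.
by apply: sumr_ge0 => i _; exact: sqrtr_ge0.
Qed.
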